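(* Let $m\ge1$ and $u_1,\ldots,u_m,v_1,\ldots,v_m$ be real parameters, and let $T(u,v)$ be the differential operator $$T(u,v)=-x\prod_{j=1}^m(D+2-v_j)+\prod_{j=1}^m(D+1-u_j),\qquad D=x\frac{d}{dx}.$$ Suppose $f$ is a function defined on $(0,1]$ solving the initial value system $$T(u,v)f(x)=0,\qquad f^{(j)}(1)=0\ \text{ for } 0\le j\le m-1.$$ Then for every integer $n\ge0$ $$\int_0^1x^nf(x)\,dx=\prod_{i=1}^m\frac{(u_i)_n}{(v_i)_n}\int_0^1f(x)\,dx.$$
   Context: $(a)_n=\Gamma(a+n)/\Gamma(a)$ denotes the Pochhammer symbol. *)

From Stdlib Require Import Reals.
From Coquelicot Require Export Coquelicot.
Open Scope R_scope.

Fixpoint poch (a : R) (n : nat) : R :=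
  match n with
  | O => 1
  | S k => poch a k * (a + INR k)
  end.

Fixpoint prodR (m : nat) (F : nat -> R) : R :=
  match m with
  | O => 1
  | S k => prodR k F * F k
  end.

Definition DplusC (c : R) (g : R -> R) : R -> R :=
  fun x => x * Derive g x + c * g x.

(* prod_{j=0}^{k-1} (D + c_j) applied to g (the factors commute). *)
Fixpoint prodD (c : nat -> R) (k : nat) (g : R -> R) : R -> R :=
  match k with
  | O => g
  | S k' => DplusC (c k') (prodD c k' g)
  end.

(* T(u,v) = - x prod_j (D + 2 - v_j) + prod_j (D + 1 - u_j),
   parameters indexed u_0..u_{m-1}, v_0..v_{m-1}. *)
Definition Top (m : nat) (u v : nat -> R) (f : R -> R) : R -> R :=
  fun x => - x * prodD (fun j => 2 - v j) m f x
           + prodD (fun j => 1 - u j) m f x.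

(* Integrating [x^(s-1) T(u,v) f] by parts [m] times shows that
   [A_s(x) = x^s W_s(x)], with [W_s] a combination of [f, ..., f^(m-1)]
   polynomial in [s] and [x], is an antiderivative of
   [x^(s-1) (pv(s) x - pu(s)) f], where [pu(s) = prod_j (1 - u_j - s)] and
   [pv(s) = prod_j (1 - v_j - s)].  The initial conditions make [A_s] vanish at [1-].
   At [0+], convergence of [int_0^1 f] bounds [A_s] for [s >= 1]; interpolating
   [s |-> x^s W_s(x)] at [m + 1] nodes in [[1, s)] gives [A_s -> 0] for [s > 1],
   and a bound uniform in [s] near [1] gives it for [s = 1].  Hence
   [pv(n+1) int x^(n+1) f = pu(n+1) int x^n f], whose ratio is
   [prod_i (u_i + n) / (v_i + n)], and the formula follows by induction on [n]. *)

From Stdlib Require Import Reals Lra Lia.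
From Coquelicot Require Import Coquelicot.
Open Scope R_scope.

Lemma filterlim_Rplus_comp {T} (F : (T -> Prop) -> Prop) {FF : Filter F}
  (a b : T -> R) la lb l :
  la + lb = l -> filterlim a F (locally la) -> filterlim b F (locally lb) ->
  filterlim (fun t => a t + b t) F (locally l).
Proof.
  intros <- Ha Hb. exact (filterlim_comp_2 a b Rplus Ha Hb (filterlim_plus la lb)).
Qed.

Lemma filterlim_Rmult_comp {T} (F : (T -> Prop) -> Prop) {FF : Filter F}
  (a b : T -> R) la lb l :
  la * lb = l -> filterlim a F (locally la) -> filterlim b F (locally lb) ->
  filterlim (fun t => a t * b t) F (locally l).
Proof.
  intros <- Ha Hb. exact (filterlim_comp_2 a b Rmult Ha Hb (filterlim_mult la lb)).
Qed.

Lemma filterlim_scal_comp {T} (F : (T -> Prop) -> Prop) {FF : Filter F}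
  (c : R) (a : T -> R) la :
  filterlim a F (locally la) -> filterlim (fun t => c * a t) F (locally (c * la)).
Proof.
  intros Ha. apply (filterlim_Rmult_comp F (fun _ => c) a c la); auto.
  apply filterlim_const.
Qed.

Lemma ball_R (a b : R) (eps : posreal) : ball a eps b <-> Rabs (b - a) < eps.
Proof. reflexivity. Qed.

Lemma at_right_interval (a d : R) : a < d -> at_right a (fun x => a < x < d).
Proof.
  intros Hd. exists (mkposreal (d - a) ltac:(lra)). intros y Hy Hya.
  apply ball_R, Rabs_lt_between' in Hy. simpl in Hy. lra.
Qed.

Lemma at_left_interval (a b : R) : a < b -> at_left b (fun x => a < x < b).
Proof.
  intros Hd. exists (mkposreal (b - a) ltac:(lra)). intros y Hy Hyb.
  apply ball_R, Rabs_lt_between' in Hy. simpl in Hy. lra.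
Qed.

Lemma locally_interval_open (a b x : R) : a < x < b -> locally x (fun y => a < y < b).
Proof.
  intros [Hax Hxb]. apply (locally_interval _ x a b); simpl; auto.
Qed.

Lemma filterlim_mult_bounded_0 (a b : R -> R) (d B : R) : 0 < d ->
  (forall x, 0 < x < d -> Rabs (a x) <= B) ->
  filterlim b (at_right 0) (locally 0) ->
  filterlim (fun x => b x * a x) (at_right 0) (locally 0).
Proof.
  intros Hd Ha Hb. apply filterlim_locally. intros eps.
  assert (HB : 0 < Rabs B + 1) by (pose proof (Rabs_pos B); lra).
  assert (Hb' := proj1 (filterlim_locally _ _) Hb
                   (mkposreal (eps / (Rabs B + 1)) ltac:(apply Rdiv_lt_0_compat; [apply cond_pos | lra]))).
  generalize (filter_and _ _ Hb' (at_right_interval 0 d Hd)). apply filter_imp.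
  intros x [Hbx Hx]. rewrite ball_R in Hbx |- *. cbn [pos] in Hbx.
  rewrite Rminus_0_r in *. rewrite Rabs_mult.
  assert (Hbx' : Rabs (b x) * (Rabs B + 1) < eps).
  { replace (pos eps) with (eps / (Rabs B + 1) * (Rabs B + 1)) by (field; lra).
    apply Rmult_lt_compat_r; lra. }
  pose proof (Ha x Hx). pose proof (RRle_abs B). pose proof (Rabs_pos (b x)).
  apply Rle_lt_trans with (Rabs (b x) * (Rabs B + 1)); [apply Rmult_le_compat_l|]; lra.
Qed.

Lemma continuous_Rmult (a b : R -> R) x :
  continuous a x -> continuous b x -> continuous (fun t => a t * b t) x.
Proof. exact (continuous_mult (K := R_AbsRing) a b x). Qed.

Lemma continuous_Rplus (a b : R -> R) x :
  continuous a x -> continuous b x -> continuous (fun t => a t + b t) x.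
Proof. exact (continuous_plus (V := R_NormedModule) a b x). Qed.

Lemma continuous_Rconst (c x : R) : continuous (fun _ : R => c) x.
Proof. exact (continuous_const (U := R_UniformSpace) (V := R_UniformSpace) c x). Qed.

Lemma is_derive_continuous (a : R -> R) x l : is_derive a x l -> continuous a x.
Proof.
  intros H. apply (ex_derive_continuous (K := R_AbsRing) (V := R_NormedModule) a).
  exists l; exact H.
Qed.

Lemma is_derive_eq_value (g : R -> R) x l l' : is_derive g x l -> l = l' -> is_derive g x l'.
Proof. intros H <-; exact H. Qed.

Lemma prodR_ext k F G : (forall i, (i < k)%nat -> F i = G i) -> prodR k F = prodR k G.
Proof. induction k as [|k IH]; intros H; simpl; auto. rewrite IH, H; auto. Qed.

Lemma prodR_mult k F G : prodR k (fun i => F i * G i) = prodR k F * prodR k G.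
Proof. induction k as [|k IH]; simpl; [ring | rewrite IH; ring]. Qed.

Lemma prodR_1 k : prodR k (fun _ => 1) = 1.
Proof. induction k as [|k IH]; simpl; [| rewrite IH]; ring. Qed.

Lemma prodR_neq_0 k F : (forall i, (i < k)%nat -> F i <> 0) -> prodR k F <> 0.
Proof.
  induction k as [|k IH]; intros H; simpl; [lra |].
  apply Rmult_integral_contrapositive_currified; auto.
Qed.

Lemma poch_neq_0 a n : (forall k, (k < n)%nat -> a + INR k <> 0) -> poch a n <> 0.
Proof.
  induction n as [|n IH]; intros H; simpl; [lra |].
  apply Rmult_integral_contrapositive_currified; auto.
Qed.

Lemma continuous_prodR (F : nat -> R -> R) k s :
  (forall j, continuous (F j) s) -> continuous (fun s => prodR k (fun j => F j s)) s.
Proof.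
  intros HF. induction k as [|k IH]; simpl.
  - apply continuous_Rconst.
  - apply continuous_Rmult; auto.
Qed.

Lemma Rpower_pos x s : 0 < Rpower x s.
Proof. apply exp_pos. Qed.

Lemma Rpower_1_l s : Rpower 1 s = 1.
Proof. unfold Rpower. rewrite ln_1, Rmult_0_r. apply exp_0. Qed.

Lemma Rpower_pred x s : 0 < x -> Rpower x s = x * Rpower x (s - 1).
Proof.
  intros Hx. replace s with (1 + (s - 1)) at 1 by ring.
  rewrite Rpower_plus, Rpower_1; auto.
Qed.

Lemma is_derive_Rpower s x : 0 < x -> is_derive (fun y => Rpower y s) x (s * Rpower x (s - 1)).
Proof.
  intros Hx. unfold Rpower.
  replace (s * exp ((s - 1) * ln x)) with (exp (s * ln x) * (s * / x)).
  - auto_derive; [exact Hx | ring].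
  - replace ((s - 1) * ln x) with (s * ln x + - ln x) by ring.
    rewrite exp_plus, exp_Ropp, exp_ln by exact Hx. field. lra.
Qed.

Lemma continuous_Rpower s x : 0 < x -> continuous (fun y => Rpower y s) x.
Proof. intros Hx. eapply is_derive_continuous, is_derive_Rpower, Hx. Qed.

Lemma Rpower_le_1 y g : 0 < y < 1 -> 0 <= g -> Rpower y g <= 1.
Proof.
  intros Hy Hg. unfold Rpower. rewrite <- exp_0.
  assert (ln y < 0) by (rewrite <- ln_1; apply ln_increasing; lra).
  destruct (Rle_lt_or_eq_dec 0 g Hg) as [Hg' | <-].
  - left. apply exp_increasing. nra.
  - right. f_equal. ring.
Qed.

Lemma continuous_Rpower_exponent x s : continuous (fun s => Rpower x s) s.
Proof.
  apply (is_derive_continuous _ _ (ln x * Rpower x s)). unfold Rpower.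
  auto_derive; [auto | ring].
Qed.

Lemma filterlim_Rpower_at_right_0 g : 0 < g ->
  filterlim (fun x => Rpower x g) (at_right 0) (locally 0).
Proof.
  intros Hg. apply filterlim_locally. intros eps.
  exists (mkposreal (exp (ln eps / g)) (exp_pos _)). intros y Hy Hy0.
  rewrite ball_R in Hy |- *. cbn [pos] in Hy. rewrite !Rminus_0_r in *. rewrite Rabs_pos_eq in Hy by lra.
  rewrite Rabs_pos_eq by (left; apply Rpower_pos).
  unfold Rpower. rewrite <- (exp_ln eps) by apply cond_pos. apply exp_increasing.
  assert (Hl : ln y < ln eps / g).
  { rewrite <- (ln_exp (ln eps / g)). apply ln_increasing; auto. }
  apply (Rmult_lt_compat_l g) in Hl; auto.
  replace (g * (ln eps / g)) with (ln eps) in Hl by (field; lra). lra.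
Qed.

(** * Integrals on an open interval *)

Section OpenInterval.

Variables a b : R.
Hypothesis Hab : a < b.

Lemma between_open_interval x y t : a < x < b -> a < y < b ->
  Rmin x y <= t <= Rmax x y -> a < t < b.
Proof.
  intros Hx Hy [H1 H2]. split.
  - apply Rlt_le_trans with (Rmin x y); auto. apply Rmin_glb_lt; lra.
  - apply Rle_lt_trans with (Rmax x y); auto. apply Rmax_lub_lt; lra.
Qed.

Lemma ex_RInt_open_interval (g : R -> R) x y :
  (forall t, a < t < b -> continuous g t) -> a < x < b -> a < y < b -> ex_RInt g x y.
Proof.
  intros Hg Hx Hy. apply (ex_RInt_continuous (V := R_CompleteNormedModule)).
  intros t Ht. apply Hg, (between_open_interval x y); auto.
Qed.

Lemma abs_RInt_deriv_mul_le (phi phi' g : R -> R) (eta x y : R) :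
  a < x -> x <= y -> y < b ->
  (forall t, a < t < b -> is_derive phi t (phi' t)) ->
  (forall t, a < t < b -> continuous phi' t) ->
  (forall t, a < t < b -> 0 <= phi' t) ->
  (forall t, a < t < b -> continuous g t) ->
  (forall t, x <= t <= y -> Rabs (g t) <= eta) ->
  Rabs (RInt (fun t => phi' t * g t) x y) <= eta * (phi y - phi x).
Proof.
  intros Hx Hxy Hy Hphi Hphi' Hphi'_pos Hg Hgbound.
  assert (Hin : forall t, Rmin x y <= t <= Rmax x y -> a < t < b)
    by (intros t; apply between_open_interval; lra).
  assert (Hcont : forall t, a < t < b -> continuous (fun t => phi' t * g t) t)
    by (intros t Ht; apply continuous_Rmult; auto).
  assert (HB : is_RInt (fun t => eta * phi' t) x y (eta * phi y - eta * phi x)).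
  { apply (is_RInt_derive (V := R_CompleteNormedModule) (fun t => eta * phi t)).
    - intros t Ht. apply is_derive_scal, Hphi, Hin, Ht.
    - intros t Ht. apply continuous_Rmult; [apply continuous_Rconst | apply Hphi', Hin, Ht]. }
  rewrite Rmult_minus_distr_l, <- (is_RInt_unique _ _ _ _ HB).
  eapply Rle_trans; [apply abs_RInt_le; auto; apply ex_RInt_open_interval; auto; lra |].
  apply RInt_le; auto.
  - apply ex_RInt_open_interval; [| lra | lra].
    intros t Ht. apply continuous_Rabs_comp, Hcont, Ht.
  - eexists; exact HB.
  - intros t Ht. rewrite Rabs_mult, Rabs_pos_eq by (apply Hphi'_pos; lra).
    rewrite Rmult_comm. apply Rmult_le_compat_r; [apply Hphi'_pos; lra | apply Hgbound; lra].
Qed.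

Variable f : R -> R.
Hypothesis f_cont : forall t, a < t < b -> continuous f t.

Lemma RInt_open_interval_minus x y c : a < x < b -> a < y < b -> a < c < b ->
  RInt f x y = RInt f x c - RInt f y c.
Proof.
  intros Hx Hy Hc.
  assert (H := RInt_Chasles f x y c (ex_RInt_open_interval f x y f_cont Hx Hy)
                 (ex_RInt_open_interval f y c f_cont Hy Hc)).
  simpl in H. unfold plus in H; simpl in H. lra.
Qed.

Lemma is_RInt_gen_Cauchy_at_right I :
  is_RInt_gen f (at_right a) (at_left b) I ->
  forall eta, 0 < eta -> exists d, a < d < b /\
    forall x y, a < x < d -> a < y < d -> Rabs (RInt f x y) <= eta.
Proof.
  intros HI eta Heta.
  destruct (HI _ (locally_ball I (mkposreal (eta / 2) ltac:(lra))))
    as [Q Rb [e HQ] HR HQR].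
  destruct (filter_ex _ (filter_and _ _ HR (at_left_interval a b Hab))) as [c [Hc Hcab]].
  assert (Hclose : forall x, a < x < Rmin (a + e) c -> Rabs (RInt f x c - I) < eta / 2).
  { intros x Hx. pose proof (Rmin_l (a + e) c). pose proof (Rmin_r (a + e) c).
    assert (Qx : Q x).
    { apply HQ; [apply ball_R, Rabs_lt_between'; lra | lra]. }
    destruct (HQR x c Qx Hc) as [l [Hl Hball]]. simpl in Hl.
    rewrite (is_RInt_unique _ _ _ _ Hl). exact Hball. }
  exists (Rmin (a + e) c). split.
  { split; [apply Rmin_glb_lt; [pose proof (cond_pos e) |]; lra |].
    pose proof (Rmin_r (a + e) c). lra. }
  intros x y Hx Hy. pose proof (Rmin_r (a + e) c).
  rewrite (RInt_open_interval_minus x y c) by lra.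
  pose proof (Hclose x Hx) as Ex. pose proof (Hclose y Hy) as Ey.
  apply Rabs_lt_between in Ex. apply Rabs_lt_between in Ey. apply Rabs_le_between. lra.
Qed.

(* A Bonnet-type estimate, by integration by parts against [t |-> RInt f y t]. *)
Lemma RInt_mul_nondecreasing_bound (phi phi' : R -> R) (eta x y : R) :
  a < x -> x <= y -> y < b ->
  (forall t, a < t < b -> is_derive phi t (phi' t)) ->
  (forall t, a < t < b -> continuous phi' t) ->
  (forall t, a < t < b -> 0 <= phi' t) -> 0 <= phi x ->
  (forall t, x <= t <= y -> Rabs (RInt f t y) <= eta) ->
  Rabs (RInt (fun t => phi t * f t) x y) <= eta * phi y.
Proof.
  intros Hx Hxy Hy Hphi Hphi' Hphi'_pos Hphix Htail.
  assert (Hin : forall t, Rmin x y <= t <= Rmax x y -> a < t < b)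
    by (intros t; apply between_open_interval; lra).
  set (E := fun t => RInt f y t).
  assert (HE : forall t, a < t < b -> is_derive E t (f t)).
  { intros t Ht. apply (is_derive_RInt f E y t); [| now apply f_cont].
    generalize (locally_interval_open a b t Ht). apply filter_imp. intros t' Ht'.
    apply (RInt_correct (V := R_CompleteNormedModule)), ex_RInt_open_interval; auto; lra. }
  assert (HEbound : forall t, x <= t <= y -> Rabs (E t) <= eta).
  { intros t Ht. unfold E. rewrite (RInt_open_interval_minus y t y), RInt_point by lra.
    unfold zero; simpl. rewrite Rminus_0_l, Rabs_Ropp. auto. }
  set (K := fun t => phi' t * E t).
  assert (HK : forall t, a < t < b -> continuous K t).
  { intros t Ht. apply continuous_Rmult; [auto | eapply is_derive_continuous; eauto]. }
  assert (Hparts : is_RInt (fun t => phi t * f t) x y (- (phi x * E x) - RInt K x y)).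
  { assert (HG : is_RInt (fun t => K t + phi t * f t) x y (phi y * E y - phi x * E x)).
    { apply (is_RInt_derive (V := R_CompleteNormedModule) (fun t => phi t * E t)).
      - intros t Ht. exact (is_derive_mult _ _ t _ _ (Hphi t (Hin t Ht)) (HE t (Hin t Ht)) Rmult_comm).
      - intros t Ht. apply continuous_Rplus; [now apply HK, Hin |].
        apply continuous_Rmult; [eapply is_derive_continuous, Hphi | apply f_cont]; auto. }
    assert (HKint := RInt_correct K x y (ex_RInt_open_interval K x y HK ltac:(lra) ltac:(lra))).
    assert (HEy : E y = 0) by (unfold E; rewrite RInt_point; reflexivity).
    rewrite HEy, Rmult_0_r, Rminus_0_l in HG.
    apply (is_RInt_ext (V := R_NormedModule) (fun t => minus (K t + phi t * f t) (K t))).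
    { intros t _. unfold minus, plus, opp; simpl. ring. }
    exact (is_RInt_minus _ _ _ _ _ _ HG HKint). }
  assert (HKbound : Rabs (RInt K x y) <= eta * (phi y - phi x)).
  { apply (abs_RInt_deriv_mul_le phi); auto.
    intros t Ht. eapply is_derive_continuous; eauto. }
  rewrite (is_RInt_unique _ _ _ _ Hparts).
  assert (HEx : Rabs (phi x * E x) <= phi x * eta).
  { rewrite Rabs_mult, Rabs_pos_eq by auto. apply Rmult_le_compat_l; auto. apply HEbound; lra. }
  apply Rabs_le_between in HEx. apply Rabs_le_between in HKbound. apply Rabs_le_between. lra.
Qed.

Lemma filter_prod_open_interval (P : R -> Prop) :
  (forall x, a < x < b -> P x) ->
  filter_prod (at_right a) (at_left b)
    (fun ab => forall x, Rmin (fst ab) (snd ab) <= x <= Rmax (fst ab) (snd ab) -> P x).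
Proof.
  intros HP.
  apply (Filter_prod _ _ _ (fun x => a < x < b) (fun x => a < x < b));
    [apply at_right_interval | apply at_left_interval |]; auto.
  intros x y Hx Hy t Ht. apply HP, (between_open_interval x y); auto.
Qed.

End OpenInterval.

(** * Functions polynomial in a parameter *)

(* [poly_param n P]: for each [x], [s |-> P s x] is a polynomial of degree at most [n].
   The encoding by iterated divided differences turns interpolation into an induction. *)
Fixpoint poly_param (n : nat) (P : R -> R -> R) : Prop :=
  match n with
  | O => forall s s' x, P s x = P s' x
  | S n' => forall s0, exists Q, poly_param n' Q /\
      forall s x, P s x = P s0 x + (s - s0) * Q s x
  end.

Lemma poly_param_ext n P P' :
  (forall s x, P s x = P' s x) -> poly_param n P -> poly_param n P'.
Proof.
  destruct n; simpl; intros E H.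
  - intros; rewrite <- !E; auto.
  - intros s0. destruct (H s0) as [Q [HQ HP]]. exists Q. split; auto.
    intros; rewrite <- !E; auto.
Qed.

Lemma poly_param_S n P : poly_param n P -> poly_param (S n) P.
Proof.
  revert P; induction n as [|n IH]; intros P H; simpl in *; intros s0.
  - exists (fun _ _ => 0). split; auto. intros; rewrite (H s s0); ring.
  - destruct (H s0) as [Q [HQ HP]]. exists Q. auto.
Qed.

Lemma poly_param_const n (h : R -> R) : poly_param n (fun _ x => h x).
Proof. induction n; [simpl; auto | apply poly_param_S; auto]. Qed.

Lemma poly_param_add n P P' :
  poly_param n P -> poly_param n P' -> poly_param n (fun s x => P s x + P' s x).
Proof.
  revert P P'; induction n as [|n IH]; simpl; intros P P' H H'.
  - intros; rewrite (H s s'), (H' s s'); auto.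
  - intros s0. destruct (H s0) as [Q [HQ HP]], (H' s0) as [Q' [HQ' HP']].
    exists (fun s x => Q s x + Q' s x). split; [apply IH; auto |].
    intros; rewrite HP, HP'; ring.
Qed.

Lemma poly_param_mulx n (h : R -> R) P :
  poly_param n P -> poly_param n (fun s x => h x * P s x).
Proof.
  revert P; induction n as [|n IH]; simpl; intros P H.
  - intros; rewrite (H s s'); auto.
  - intros s0. destruct (H s0) as [Q [HQ HP]].
    exists (fun s x => h x * Q s x). split; [apply IH; auto |].
    intros; rewrite HP; ring.
Qed.

Lemma poly_param_mul_linear n c P :
  poly_param n P -> poly_param (S n) (fun s x => (c - s) * P s x).
Proof.
  revert P; induction n as [|n IH]; intros P H; simpl in H; simpl; intros s0.
  - exists (fun _ x => - P s0 x). split; auto. intros; rewrite (H s s0); ring.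
  - destruct (H s0) as [Q [HQ HP]].
    exists (fun s x => (c - s) * Q s x + - P s0 x). split.
    + apply (poly_param_add (S n)); [apply IH | apply poly_param_const]; auto.
    + intros; rewrite HP; ring.
Qed.

Lemma poly_param_shift n a P : poly_param n P -> poly_param n (fun s x => P (s + a) x).
Proof.
  revert P; induction n as [|n IH]; simpl; intros P H.
  - intros; apply H.
  - intros s0. destruct (H (s0 + a)) as [Q [HQ HP]].
    exists (fun s x => Q (s + a) x). split; [apply IH; auto |].
    intros; rewrite HP. f_equal. f_equal. ring.
Qed.

Lemma filterlim_poly_param_0 (F : (R -> Prop) -> Prop) {FF : Filter F}
  n P (phi : R -> R) (nodes : nat -> R) :
  poly_param n P -> (forall i j, nodes i = nodes j -> i = j) ->
  (forall j, (j <= n)%nat -> filterlim (fun x => phi x * P (nodes j) x) F (locally 0)) ->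
  forall s, filterlim (fun x => phi x * P s x) F (locally 0).
Proof.
  revert P nodes; induction n as [|n IH]; intros P nodes HP Hinj Hlim s; simpl in HP.
  - apply (filterlim_ext (fun x => phi x * P (nodes 0%nat) x)).
    + intros x; rewrite (HP s (nodes 0%nat)); auto.
    + apply Hlim; lia.
  - set (s0 := nodes 0%nat). destruct (HP s0) as [Q [HQ HPQ]].
    assert (HQlim : forall s, filterlim (fun x => phi x * Q s x) F (locally 0)).
    { apply (IH Q (fun j => nodes (S j))); auto.
      - intros i j Hij. apply Hinj in Hij. lia.
      - intros j Hj.
        assert (Hne : nodes (S j) - s0 <> 0).
        { intros E. assert (nodes (S j) = s0) as E' by lra. apply Hinj in E'. lia. }
        apply (filterlim_ext (fun x => / (nodes (S j) - s0) *
                 (phi x * P (nodes (S j)) x + (-1) * (phi x * P s0 x)))).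
        { intros x. rewrite (HPQ (nodes (S j))). field. auto. }
        apply (filterlim_Rmult_comp F _ _ (/ (nodes (S j) - s0)) 0); [ring | apply filterlim_const |].
        apply (filterlim_Rplus_comp F _ _ 0 0); [ring | apply Hlim; lia |].
        apply (filterlim_Rmult_comp F _ _ (-1) 0); [ring | apply filterlim_const | apply Hlim; lia]. }
    apply (filterlim_ext (fun x => phi x * P s0 x + (s - s0) * (phi x * Q s x))).
    { intros x; rewrite (HPQ s); ring. }
    apply (filterlim_Rplus_comp F _ _ 0 0); [ring | apply Hlim; lia |].
    apply (filterlim_Rmult_comp F _ _ (s - s0) 0); [ring | apply filterlim_const | auto].
Qed.

Lemma poly_param_continuous n P x s0 :
  poly_param n P -> continuous (fun s => P s x) s0.
Proof.
  revert P; induction n as [|n IH]; intros P H; simpl in H.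
  - apply (filterlim_ext (fun _ => P s0 x)); [intros; apply H | apply filterlim_const].
  - destruct (H s0) as [Q [HQ HP]].
    apply (filterlim_ext (fun s => P s0 x + (s + - s0) * Q s x)); [intros s; rewrite (HP s); ring |].
    apply (filterlim_Rplus_comp _ _ _ (P s0 x) 0); [ring | apply filterlim_const |].
    apply (filterlim_Rmult_comp _ _ _ 0 (Q s0 x)); [ring | | apply IH; auto].
    apply (filterlim_Rplus_comp _ _ _ s0 (- s0)); [ring | apply filterlim_id | apply filterlim_const].
Qed.

(** * Moments of a solution *)

Section Moments.

Variable m : nat.
Variable f : R -> R.
Hypothesis Hdiff : forall (k : nat) (x : R), (k <= m)%nat -> 0 < x < 1 -> ex_derive_n f k x.
Hypothesis Hinit : forall j : nat, (j < m)%nat ->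
  filterlim (Derive_n f j) (at_left 1) (locally 0).
Hypothesis Hm : (1 <= m)%nat.

Inductive diff_expr (k : nat) : (R -> R) -> Prop :=
| diff_expr_Derive_n j : (j <= k)%nat -> diff_expr k (Derive_n f j)
| diff_expr_plus g h : diff_expr k g -> diff_expr k h -> diff_expr k (fun x => g x + h x)
| diff_expr_scal a g : diff_expr k g -> diff_expr k (fun x => a * g x)
| diff_expr_mulx g : diff_expr k g -> diff_expr k (fun x => x * g x)
| diff_expr_ext g h : diff_expr k g -> (forall x, 0 < x < 1 -> g x = h x) -> diff_expr k h.

Lemma diff_expr_le k k' g : (k <= k')%nat -> diff_expr k g -> diff_expr k' g.
Proof.
  intros Hk H; induction H.
  - apply diff_expr_Derive_n; lia.
  - apply diff_expr_plus; auto.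
  - apply diff_expr_scal; auto.
  - apply diff_expr_mulx; auto.
  - eapply diff_expr_ext; eauto.
Qed.

Lemma diff_expr_0 k : diff_expr k (fun _ => 0).
Proof.
  apply (diff_expr_ext k (fun x => 0 * Derive_n f 0 x)); [| intros; ring].
  apply diff_expr_scal, diff_expr_Derive_n; lia.
Qed.

Lemma diff_expr_derive k g : (k < m)%nat -> diff_expr k g ->
  exists g', diff_expr (S k) g' /\ forall x, 0 < x < 1 -> is_derive g x (g' x).
Proof.
  intros Hk H; induction H as [j Hj | g h _ [g' [Hg' Dg]] _ [h' [Hh' Dh]]
                              | a g _ [g' [Hg' Dg]] | g Hg [g' [Hg' Dg]] | g h _ [g' [Hg' Dg]] Hgh].
  - exists (Derive_n f (S j)). split; [apply diff_expr_Derive_n; lia |].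
    intros x Hx. apply Derive_correct. exact (Hdiff (S j) x ltac:(lia) Hx).
  - exists (fun x => g' x + h' x). split; [apply diff_expr_plus; auto |].
    intros x Hx. apply (is_derive_plus g h); auto.
  - exists (fun x => a * g' x). split; [apply diff_expr_scal; auto |].
    intros x Hx. apply is_derive_scal; auto.
  - exists (fun x => 1 * g x + x * g' x). split.
    + apply diff_expr_plus; [apply diff_expr_scal, (diff_expr_le k); auto | apply diff_expr_mulx; auto].
    + intros x Hx. exact (is_derive_mult (fun t => t) g x 1 (g' x) (is_derive_id x) (Dg x Hx) Rmult_comm).
  - exists g'. split; auto. intros x Hx. apply (is_derive_ext_loc g h); auto.
    generalize (locally_interval_open 0 1 x Hx). apply filter_imp. auto.
Qed.

Lemma filterlim_diff_expr_at_left_1 k g : (k < m)%nat -> diff_expr k g ->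
  filterlim g (at_left 1) (locally 0).
Proof.
  intros Hk H; induction H as [j Hj | g h _ IHg _ IHh | a g _ IHg | g _ IHg | g h _ IHg Hgh].
  - apply Hinit; lia.
  - apply (filterlim_Rplus_comp _ _ _ 0 0); auto; ring.
  - rewrite <- (Rmult_0_r a). apply (filterlim_scal_comp (at_left 1)); auto.
  - apply (filterlim_Rmult_comp _ _ _ 1 0); auto; [ring |].
    apply (filterlim_filter_le_1 (F := locally 1)); [intros P HP; apply filter_le_within, HP |].
    apply filterlim_id.
  - apply (filterlim_ext_loc g h); auto.
    generalize (at_left_interval 0 1 Rlt_0_1). apply filter_imp. auto.
Qed.

Lemma diff_expr_prodD c k : (k <= m)%nat -> diff_expr k (prodD c k f).
Proof.
  induction k as [|k IH]; intros Hk; simpl.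
  - apply (diff_expr_ext 0 (Derive_n f 0)); [apply diff_expr_Derive_n | ]; auto.
  - destruct (diff_expr_derive k _ ltac:(lia) (IH ltac:(lia))) as [g' [Hg' Dg]].
    apply (diff_expr_ext (S k) (fun x => x * g' x + c k * prodD c k f x)).
    + apply diff_expr_plus; [apply diff_expr_mulx; auto |].
      apply diff_expr_scal, (diff_expr_le k); [lia | apply IH; lia].
    + intros x Hx. unfold DplusC. rewrite (is_derive_unique _ _ _ (Dg x Hx)). reflexivity.
Qed.

Lemma is_derive_prodD c k x : (k < m)%nat -> 0 < x < 1 ->
  is_derive (prodD c k f) x (Derive (prodD c k f) x).
Proof.
  intros Hk Hx. destruct (diff_expr_derive k _ Hk (diff_expr_prodD c k ltac:(lia))) as [g' [_ Dg]].
  apply Derive_correct. exists (g' x). auto.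
Qed.

Lemma ex_derive_f x : 0 < x < 1 -> ex_derive f x.
Proof. intros Hx. eexists. exact (is_derive_prodD (fun _ => 0) 0 x Hm Hx). Qed.

Lemma continuous_f x : 0 < x < 1 -> continuous f x.
Proof.
  intros Hx. apply (ex_derive_continuous (K := R_AbsRing) (V := R_NormedModule)), ex_derive_f, Hx.
Qed.

(* [bdry c k s] is the boundary term of the [k]-fold integration by parts
   of [x^(s-1) (D + c_(k-1)) ... (D + c_0) f]. *)
Fixpoint bdry (c : nat -> R) (k : nat) (s x : R) : R :=
  match k with
  | O => 0
  | S k' => prodD c k' f x + (c k' - s) * bdry c k' s x
  end.

Lemma is_derive_Rpower_bdry c s k x : (k <= m)%nat -> 0 < x < 1 ->
  is_derive (fun y => Rpower y s * bdry c k s y) x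
    (Rpower x (s - 1) * (prodD c k f x - prodR k (fun j => c j - s) * f x)).
Proof.
  intros Hk Hx. induction k as [|k IH]; simpl.
  - apply (is_derive_ext (fun _ => 0)); [intros; simpl; ring |].
    replace (Rpower x (s - 1) * (f x - 1 * f x)) with 0 by ring. apply (is_derive_const 0).
  - assert (D1 := is_derive_mult _ _ x _ _ (is_derive_Rpower s x (proj1 Hx))
                    (is_derive_prodD c k x ltac:(lia) Hx) Rmult_comm).
    assert (D := is_derive_plus _ _ x _ _ D1 (is_derive_scal _ x (c k - s) _ (IH ltac:(lia)))).
    apply (is_derive_ext (fun y => Rpower y s * prodD c k f y + (c k - s) * (Rpower y s * bdry c k s y)));
      [intros; simpl; ring |].
    apply (is_derive_eq_value _ _ _ _ D). unfold DplusC, plus, mult; simpl.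
    rewrite (Rpower_pred x s (proj1 Hx)). ring.
Qed.

Lemma diff_expr_bdry c k s : (k <= m)%nat -> diff_expr (m - 1) (bdry c k s).
Proof.
  induction k as [|k IH]; intros Hk; simpl; [apply diff_expr_0 |].
  apply diff_expr_plus; [apply (diff_expr_le k), diff_expr_prodD; lia |].
  apply diff_expr_scal, IH; lia.
Qed.

Lemma poly_param_bdry c k : poly_param k (bdry c k).
Proof.
  induction k as [|k IH]; simpl; [auto |].
  apply (poly_param_add (S k)); [apply poly_param_const | apply poly_param_mul_linear; auto].
Qed.

Variables u v : nat -> R.
Hypothesis Hode : forall x : R, 0 < x < 1 -> Top m u v f x = 0.

Definition cu (j : nat) := 1 - u j.
Definition cv (j : nat) := 2 - v j.
Definition pu (s : R) := prodR m (fun j => cu j - s).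
Definition pv (s : R) := prodR m (fun j => cv j - (s + 1)).
Definition bdry_ode (s x : R) := bdry cu m s x - x * bdry cv m (s + 1) x.
Definition antider (s x : R) := Rpower x s * bdry_ode s x.

(* The equation [x prod_j (D + cv_j) f = prod_j (D + cu_j) f] cancels the
   differential parts of the two boundary-term derivatives. *)
Lemma is_derive_antider s x : 0 < x < 1 ->
  is_derive (antider s) x (Rpower x (s - 1) * (pv s * x - pu s) * f x).
Proof.
  intros Hx.
  assert (D := is_derive_minus _ _ x _ _ (is_derive_Rpower_bdry cu s m x (le_n _) Hx)
                 (is_derive_Rpower_bdry cv (s + 1) m x (le_n _) Hx)).
  apply (is_derive_ext_loc (fun y => Rpower y s * bdry cu m s y - Rpower y (s + 1) * bdry cv m (s + 1) y)).
  { generalize (locally_interval_open 0 1 x Hx). apply filter_imp. intros y Hy.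
    unfold antider, bdry_ode. rewrite Rpower_plus, Rpower_1 by lra. simpl. ring. }
  apply (is_derive_eq_value _ _ _ _ D). unfold minus, plus, opp; simpl.
  assert (Ho := Hode x Hx). unfold Top in Ho. fold cu cv in Ho.
  replace (s + 1 - 1) with s by ring. rewrite (Rpower_pred x s (proj1 Hx)).
  unfold pu, pv. replace (prodD cu m f x) with (x * prodD cv m f x) by lra. ring.
Qed.

Lemma filterlim_antider_at_left_1 s : filterlim (antider s) (at_left 1) (locally 0).
Proof.
  apply (filterlim_Rmult_comp _ _ _ 1 0); [ring | |].
  - apply (filterlim_filter_le_1 (F := locally 1)); [intros P HP; apply filter_le_within, HP |].
    rewrite <- (Rpower_1_l s) at 2. apply continuous_Rpower; lra.
  - apply (filterlim_diff_expr_at_left_1 (m - 1)); [lia |].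
    apply (diff_expr_ext _ (fun x => bdry cu m s x + (-1) * (x * bdry cv m (s + 1) x)));
      [| intros; unfold bdry_ode; ring].
    apply diff_expr_plus; [| apply diff_expr_scal, diff_expr_mulx]; apply diff_expr_bdry; auto.
Qed.

Lemma continuous_Rpower_f g x : 0 < x < 1 -> continuous (fun t => Rpower t g * f t) x.
Proof. intros Hx. apply continuous_Rmult; [apply continuous_Rpower | apply continuous_f]; lra. Qed.

Lemma antider_minus s x y : 0 < x -> x <= y -> y < 1 ->
  antider s y - antider s x =
  pv s * RInt (fun t => Rpower t s * f t) x y - pu s * RInt (fun t => Rpower t (s - 1) * f t) x y.
Proof.
  intros Hx Hxy Hy.
  assert (Hin : forall t, Rmin x y <= t <= Rmax x y -> 0 < t < 1)
    by (intros t; apply between_open_interval; lra).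
  assert (Hint : forall g, is_RInt (fun t => Rpower t g * f t) x y (RInt (fun t => Rpower t g * f t) x y)).
  { intros g. apply (RInt_correct (V := R_CompleteNormedModule)), (ex_RInt_open_interval 0 1);
      [intros; apply continuous_Rpower_f | ..]; lra. }
  assert (Hcomb := is_RInt_minus _ _ _ _ _ _ (is_RInt_scal _ _ _ (pv s) _ (Hint s))
                     (is_RInt_scal _ _ _ (pu s) _ (Hint (s - 1)))).
  set (dA := fun t => Rpower t (s - 1) * (pv s * t - pu s) * f t).
  assert (HFTC : is_RInt dA x y (minus (antider s y) (antider s x))).
  { apply (is_RInt_derive (V := R_CompleteNormedModule)).
    - intros t Ht. apply is_derive_antider, Hin, Ht.
    - intros t Ht. specialize (Hin t Ht). unfold dA.
      apply continuous_Rmult; [apply continuous_Rmult | apply continuous_f]; auto.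
      + apply continuous_Rpower; lra.
      + apply continuous_Rplus; [apply continuous_Rmult |];
          [apply continuous_Rconst | apply continuous_id | apply continuous_Rconst]. }
  transitivity (RInt dA x y); [symmetry; exact (is_RInt_unique _ _ _ _ HFTC) |].
  apply is_RInt_unique. apply (is_RInt_ext (V := R_NormedModule)) with (2 := Hcomb).
  intros t Ht. rewrite Rmin_left, Rmax_right in Ht by lra.
  unfold dA, minus, plus, opp, scal; simpl. unfold mult; simpl.
  rewrite (Rpower_pred t s) by lra. ring.
Qed.

Variable I : R.
Hypothesis HI : is_RInt_gen f (at_right 0) (at_left 1) I.

Lemma RInt_Rpower_f_small eta : 0 < eta -> exists d, 0 < d < 1 /\
  forall g x y, 0 <= g -> 0 < x -> x <= y -> y < d ->
    Rabs (RInt (fun t => Rpower t g * f t) x y) <= eta.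
Proof.
  intros Heta.
  destruct (is_RInt_gen_Cauchy_at_right 0 1 Rlt_0_1 f continuous_f I HI eta Heta)
    as [d [Hd Htail]].
  exists d. split; [lra |]. intros g x y Hg Hx Hxy Hy.
  apply Rle_trans with (eta * Rpower y g).
  - apply (RInt_mul_nondecreasing_bound 0 1 f continuous_f
             (fun t => Rpower t g) (fun t => g * Rpower t (g - 1))); try lra.
    + intros t Ht. apply is_derive_Rpower; lra.
    + intros t Ht. apply continuous_Rmult; [apply continuous_Rconst | apply continuous_Rpower; lra].
    + intros t Ht. apply Rmult_le_pos; [lra | left; apply Rpower_pos].
    + left; apply Rpower_pos.
    + intros t Ht. apply Htail; lra.
  - rewrite <- (Rmult_1_r eta) at 2. apply Rmult_le_compat_l; [lra |]. apply Rpower_le_1; lra.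
Qed.

Lemma antider_Cauchy_at_right_0 eps : 0 < eps -> exists d, 0 < d < 1 /\
  forall s x y, 1 <= s -> 0 < x -> x <= y -> y < d ->
    Rabs (antider s y - antider s x) <= (Rabs (pv s) + Rabs (pu s)) * eps.
Proof.
  intros Heps. destruct (RInt_Rpower_f_small eps Heps) as [d [Hd Hsmall]].
  exists d. split; auto. intros s x y Hs Hx Hxy Hy.
  rewrite antider_minus by lra.
  eapply Rle_trans; [apply Rabs_triang |]. rewrite Rabs_Ropp, !Rabs_mult, Rmult_plus_distr_r.
  apply Rplus_le_compat; apply Rmult_le_compat_l; try apply Rabs_pos; apply Hsmall; lra.
Qed.

Lemma antider_bounded_at_right_0 s : 1 <= s ->
  exists d B, 0 < d /\ forall x, 0 < x < d -> Rabs (antider s x) <= B.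
Proof.
  intros Hs. destruct (antider_Cauchy_at_right_0 1 Rlt_0_1) as [d [Hd Hosc]].
  exists (d / 2), (Rabs (antider s (d / 2)) + (Rabs (pv s) + Rabs (pu s)) * 1). split; [lra |].
  intros x Hx. specialize (Hosc s x (d / 2) Hs ltac:(lra) ltac:(lra) ltac:(lra)).
  replace (antider s x) with (antider s (d / 2) - (antider s (d / 2) - antider s x)) by ring.
  eapply Rle_trans; [apply Rabs_triang |]. rewrite Rabs_Ropp. lra.
Qed.

Lemma poly_param_bdry_ode : poly_param m bdry_ode.
Proof.
  apply (poly_param_ext m (fun s x => bdry cu m s x + (- x) * bdry cv m (s + 1) x));
    [intros; unfold bdry_ode; ring |].
  apply poly_param_add; [apply poly_param_bdry |].
  apply (poly_param_mulx m (fun x => - x)), (poly_param_shift m 1 (bdry cv m)), poly_param_bdry.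
Qed.

(* For [1 <= p < sg], [x^sg bdry_ode p x = x^(sg - p) antider p x] tends to 0;
   interpolating over [m + 1] such [p] reaches [p = sg]. *)
Lemma filterlim_antider_at_right_0_gt_1 sg : 1 < sg ->
  filterlim (antider sg) (at_right 0) (locally 0).
Proof.
  intros Hsg. set (nodes := fun j : nat => sg - (sg - 1) / (INR j + 1)).
  assert (Hnodes : forall j, 1 <= nodes j < sg).
  { intros j. pose proof (pos_INR j). unfold nodes. split.
    - assert ((sg - 1) / (INR j + 1) <= sg - 1); [| lra].
      apply Rmult_le_reg_r with (INR j + 1); [lra |].
      unfold Rdiv. rewrite Rmult_assoc, Rinv_l by lra. nra.
    - assert (0 < (sg - 1) / (INR j + 1)) by (apply Rdiv_lt_0_compat; lra). lra. }
  apply (filterlim_poly_param_0 _ m bdry_ode (fun x => Rpower x sg) nodes poly_param_bdry_ode).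
  - intros i j Hij. unfold nodes in Hij. apply INR_eq.
    pose proof (pos_INR i). pose proof (pos_INR j).
    assert (E : (sg - 1) / (INR i + 1) = (sg - 1) / (INR j + 1)) by lra.
    apply (f_equal Rinv) in E. rewrite !Rinv_div in E.
    apply (Rmult_eq_compat_l (sg - 1)) in E. unfold Rdiv in E.
    rewrite <- !Rmult_assoc, Rinv_r_simpl_m in E by lra.
    rewrite Rinv_r_simpl_m in E by lra. lra.
  - intros j _. destruct (Hnodes j) as [Hj1 Hj2].
    destruct (antider_bounded_at_right_0 (nodes j) Hj1) as [d [B [Hd Hb]]].
    apply (filterlim_ext_loc (fun x => Rpower x (sg - nodes j) * antider (nodes j) x)).
    + generalize (at_right_interval 0 1 Rlt_0_1). apply filter_imp. intros y Hy.
      unfold antider. rewrite <- Rmult_assoc, <- Rpower_plus. do 3 f_equal. ring.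
    + apply (filterlim_mult_bounded_0 _ _ d B); auto. apply filterlim_Rpower_at_right_0. lra.
Qed.

Lemma continuous_antider_exponent x s : continuous (fun s => antider s x) s.
Proof.
  apply continuous_Rmult; [apply continuous_Rpower_exponent |].
  exact (poly_param_continuous m bdry_ode x s poly_param_bdry_ode).
Qed.

Lemma continuous_pu_pv_norm s : continuous (fun s => Rabs (pv s) + Rabs (pu s)) s.
Proof.
  apply continuous_Rplus; apply continuous_Rabs_comp, continuous_prodR; intros j;
    apply (is_derive_continuous _ _ (-1)); auto_derive; try ring; trivial.
Qed.

(* The oscillation bound of [antider_Cauchy_at_right_0] is uniform in [s] near [1],
   so [antider 1] inherits the limit of [antider sg] for some [sg > 1] close to [1]. *)
Lemma filterlim_antider_at_right_0_1 : filterlim (antider 1) (at_right 0) (locally 0).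
Proof.
  apply filterlim_locally. intros eps.
  set (K := Rabs (pv 1) + Rabs (pu 1) + 1).
  assert (HK : 0 < K) by (pose proof (Rabs_pos (pv 1)); pose proof (Rabs_pos (pu 1)); unfold K; lra).
  assert (Heps4 : 0 < eps / 4) by (pose proof (cond_pos eps); lra).
  assert (HeK : 0 < eps / (4 * K)) by (apply Rdiv_lt_0_compat; [apply cond_pos | lra]).
  destruct (antider_Cauchy_at_right_0 _ HeK) as [d [Hd Hosc]].
  set (x0 := d / 2).
  assert (Hosc4 : forall s x, 1 <= s -> Rabs (pv s) + Rabs (pu s) <= K -> 0 < x < x0 ->
            Rabs (antider s x0 - antider s x) <= eps / 4).
  { intros s x Hs HsK Hx. eapply Rle_trans; [apply Hosc; unfold x0 in *; lra |].
    replace (eps / 4) with (K * (eps / (4 * K))) by (field; lra).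
    apply Rmult_le_compat_r; [lra | auto]. }
  assert (Hnear : at_right 1 (fun s => 1 < s /\ Rabs (antider s x0 - antider 1 x0) < eps / 4 /\
                                      Rabs (pv s) + Rabs (pu s) <= K)).
  { assert (H1 := proj1 (filterlim_locally _ _) (continuous_antider_exponent x0 1) (mkposreal _ Heps4)).
    assert (H2 := proj1 (filterlim_locally _ _) (continuous_pu_pv_norm 1) (mkposreal _ Rlt_0_1)).
    generalize (filter_and _ _ H1 H2). unfold at_right, within. apply filter_imp.
    intros s [Hs1 Hs2] Hs. rewrite ball_R in Hs1, Hs2. cbn [pos] in Hs1, Hs2.
    apply Rabs_lt_between' in Hs2. unfold K. repeat split; lra. }
  destruct (filter_ex _ Hnear) as [sg [Hsg1 [Hsgx0 HsgK]]].
  assert (Hlim := proj1 (filterlim_locally _ _) (filterlim_antider_at_right_0_gt_1 sg Hsg1)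
                    (mkposreal _ Heps4)).
  generalize (filter_and _ _ Hlim (at_right_interval 0 x0 ltac:(unfold x0; lra))). apply filter_imp.
  intros x [Hx Hxx0]. rewrite ball_R in Hx |- *. cbn [pos] in Hx. rewrite !Rminus_0_r in *.
  assert (E1 := Hosc4 1 x (Rle_refl 1) ltac:(unfold K; lra) Hxx0).
  assert (E2 := Hosc4 sg x ltac:(lra) HsgK Hxx0).
  apply Rabs_le_between in E1, E2. apply Rabs_lt_between in Hx, Hsgx0. apply Rabs_lt_between.
  pose proof (cond_pos eps). lra.
Qed.

Lemma filterlim_antider_at_right_0 (n : nat) :
  filterlim (antider (INR n + 1)) (at_right 0) (locally 0).
Proof.
  destruct n as [|n].
  - rewrite Rplus_0_l. apply filterlim_antider_at_right_0_1.
  - apply filterlim_antider_at_right_0_gt_1. pose proof (lt_0_INR (S n) ltac:(lia)). lra.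
Qed.

Hypothesis Hv : forall i k : nat, (i < m)%nat -> v i + INR k <> 0.

Lemma pv_neq_0 (n : nat) : pv (INR n + 1) <> 0.
Proof.
  apply prodR_neq_0. intros i Hi. unfold cv. pose proof (Hv i n Hi). lra.
Qed.

Lemma is_RInt_gen_moment_relation n :
  is_RInt_gen (fun x => pv (INR n + 1) * (x ^ S n * f x) - pu (INR n + 1) * (x ^ n * f x))
    (at_right 0) (at_left 1) 0.
Proof.
  set (s := INR n + 1).
  assert (Hderiv : forall x, 0 < x < 1 ->
            Derive (antider s) x = pv s * (x ^ S n * f x) - pu s * (x ^ n * f x)).
  { intros x Hx. rewrite (is_derive_unique _ _ _ (is_derive_antider s x Hx)).
    unfold s. replace (INR n + 1 - 1) with (INR n) by ring. rewrite Rpower_pow by lra. simpl. ring. }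
  assert (HFTC : is_RInt_gen (Derive (antider s)) (at_right 0) (at_left 1) (0 - 0)).
  { apply is_RInt_gen_Derive.
    - apply (filter_prod_open_interval 0 1 Rlt_0_1). intros x Hx. eexists. apply is_derive_antider, Hx.
    - apply (filter_prod_open_interval 0 1 Rlt_0_1). intros x Hx.
      apply (continuous_ext_loc _ (fun x => pv s * (x ^ S n * f x) - pu s * (x ^ n * f x))).
      + generalize (locally_interval_open 0 1 x Hx). apply filter_imp. intros y Hy.
        symmetry. apply Hderiv, Hy.
      + apply (ex_derive_continuous (K := R_AbsRing) (V := R_NormedModule)).
        assert (Hf := ex_derive_f x Hx). auto_derive. tauto.
    - exact (filterlim_antider_at_right_0 n).
    - apply filterlim_antider_at_left_1. }
  rewrite Rminus_0_r in HFTC. eapply is_RInt_gen_ext; [| exact HFTC].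
  generalize (filter_prod_open_interval 0 1 Rlt_0_1 _ Hderiv). apply filter_imp.
  intros ab Hab x Hx. apply Hab. lra.
Qed.

Lemma is_RInt_gen_moment_S n M :
  is_RInt_gen (fun x => x ^ n * f x) (at_right 0) (at_left 1) M ->
  is_RInt_gen (fun x => x ^ S n * f x) (at_right 0) (at_left 1) (pu (INR n + 1) / pv (INR n + 1) * M).
Proof.
  intros HM.
  assert (H := is_RInt_gen_scal _ (/ pv (INR n + 1)) _
                 (is_RInt_gen_plus _ _ _ _ (is_RInt_gen_moment_relation n)
                    (is_RInt_gen_scal _ (pu (INR n + 1)) _ HM))).
  replace (pu (INR n + 1) / pv (INR n + 1) * M)
    with (scal (/ pv (INR n + 1)) (plus 0 (scal (pu (INR n + 1)) M))).
  2:{ unfold scal, plus; simpl. unfold mult; simpl. field. apply pv_neq_0. }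
  eapply is_RInt_gen_ext; [| exact H].
  apply filter_forall. intros ab x _.
  unfold scal, plus; simpl. unfold mult; simpl. field. apply pv_neq_0.
Qed.

Lemma pu_div_pv n :
  pu (INR n + 1) / pv (INR n + 1) = prodR m (fun i => (u i + INR n) / (v i + INR n)).
Proof.
  apply (Rmult_eq_reg_r (pv (INR n + 1))); [| apply pv_neq_0].
  unfold Rdiv. rewrite Rmult_assoc, Rinv_l, Rmult_1_r by apply pv_neq_0.
  unfold pu, pv. rewrite <- prodR_mult. apply prodR_ext. intros i Hi.
  unfold cu, cv. pose proof (Hv i n Hi). field. auto.
Qed.

Lemma is_RInt_gen_moment n :
  is_RInt_gen (fun x => x ^ n * f x) (at_right 0) (at_left 1)
    (prodR m (fun i => poch (u i) n / poch (v i) n) * I).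
Proof.
  induction n as [|n IH].
  - apply (is_RInt_gen_ext f); [apply filter_forall; intros; simpl; ring |].
    rewrite (prodR_ext m _ (fun _ => 1)), prodR_1, Rmult_1_l; [exact HI |].
    intros; simpl; field.
  - replace (prodR m (fun i => poch (u i) (S n) / poch (v i) (S n)) * I)
      with (pu (INR n + 1) / pv (INR n + 1) * (prodR m (fun i => poch (u i) n / poch (v i) n) * I)).
    { exact (is_RInt_gen_moment_S n _ IH). }
    rewrite pu_div_pv, <- Rmult_assoc, <- prodR_mult. f_equal. apply prodR_ext.
    intros i Hi. simpl. pose proof (Hv i n Hi).
    assert (poch (v i) n <> 0) by (apply poch_neq_0; auto). field. auto.
Qed.

End Moments.

Theorem mainTheorem3 (m : nat) (Hm : (1 <= m)%nat) (u v : nat -> R)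
  (Hv : forall i k : nat, (i < m)%nat -> v i + INR k <> 0)
  (f : R -> R)
  (Hdiff : forall (k : nat) (x : R), (k <= m)%nat -> 0 < x < 1 -> ex_derive_n f k x)
  (Hode : forall x : R, 0 < x < 1 -> Top m u v f x = 0)
  (Hf1 : f 1 = 0)
  (Hinit : forall j : nat, (j < m)%nat ->
     filterlim (Derive_n f j) (at_left 1) (locally 0))
  (I : R) (HI : is_RInt_gen f (at_right 0) (at_left 1) I) :
  forall n : nat,
    is_RInt_gen (fun x => x ^ n * f x) (at_right 0) (at_left 1)
      (prodR m (fun i => poch (u i) n / poch (v i) n) * I).
Proof.
  exact (is_RInt_gen_moment m f Hdiff Hinit Hm u v Hode I HI Hv).
Qed.
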